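(* Let $n,m$ be positive integers and $\sigma$ a composition of $m$ with $\ell(\sigma)$ parts. The maps $\Phi_\sigma:\Delta(\mathcal{T}_n,m)\to\Gamma(\mathsf{hypo}_{n+\ell(\sigma)-1},\sigma)$, $Q\mapsto\pi_\sigma(Q)$, and $\Gamma(\mathsf{hypo}_{n+\ell(\sigma)-1},\sigma)\to\Delta(\mathcal{T}_n,m)$, $T\mapsto\overline{T}$, are mutually inverse isomorphisms of unlabelled directed graphs.
   Context: A quasi-array of size $m$ is an array $Q$ with cells $(i,j)$, $1\le i\le m$, $1\le j\le m-i+1$, each containing a positive integer $Q_{(i,j)}$, with $Q_{(1,j)}\le Q_{(1,j+1)}$ and $Q_{(i,j)}=Q_{(1,i+j-1)}+i-1$. The $k$-th diagonal is the set of cells with $i+j-1=k$. For $Q$ of size $m$: $D_m$ is always defined and adds $1$ to every entry of the $m$-th diagonal; for $1\le k\le m-1$, $D_k$ is defined iff $Q_{(1,k)}<Q_{(1,k+1)}$, and then adds $1$ to every entry of the $k$-th diagonal. $\mathcal{T}_n$ is the set of quasi-arrays whose first-row rightmost entry is at most $n$. $\Delta(\mathcal{T}_n,m)$ is the directed graph whose vertices are the quasi-arrays of size $m$ in $\mathcal{T}_n$, with an edge $Q\to D_k(Q)$ labelled $k$ whenever $D_k$ is defined on $Q$ and $D_k(Q)\in\mathcal{T}_n$. A quasi-ribbon tableau of shape $\sigma=(\sigma_1,\dots,\sigma_r)$ is a filling with positive integers of the diagram having $\sigma_i$ cells in row $i$, the leftmost cell of row $i+1$ directly below the rightmost cell of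 row $i$, weakly increasing along rows and strictly increasing down columns; its column reading is read column by column left to right, each column bottom to top. Quasi-Kashiwara operator $f_i$ on a word $u$: undefined if $u$ contains a subsequence $(i+1)\,i$ or no letter $i$; otherwise replaces the rightmost $i$ by $i+1$. For $N\ge1$, $\Gamma(\mathsf{hypo}_N,\sigma)$ is the directed graph whose vertices are the quasi-ribbon tableaux of shape $\sigma$ with entries in $\{1,\dots,N\}$ (identified with column readings), with an edge $u\to f_i(u)$ labelled $i$ for $1\le i\le N-1$ whenever $f_i(u)$ is defined. $\pi_\sigma(Q)$ is the quasi-ribbon tableau formed by the cells of $Q$ making up a quasi-ribbon diagram of shape $\sigma$ with first cell $(1,1)$; for a quasi-ribbon tableau $T$ of shape $\sigma$ with $m$ cells, $\overline{T}$ is the unique quasi-array of size $m$ with $\pi_\sigma(\overline{T})=T$. *)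

From mathcomp Require Import all_boot.
Set Implicit Arguments. Unset Strict Implicit. Unset Printing Implicit Defensive.

(* ---------- Quasi-arrays ----------
   A quasi-array of size m is stored as its list of rows: row i (1-indexed)
   is a list of m-i+1 entries Q_(i,1), ..., Q_(i,m-i+1). *)

Definition qent (Q : seq (seq nat)) (i j : nat) : nat :=
  nth 0 (nth [::] Q i.-1) j.-1.

Definition is_quasi_array (m : nat) (Q : seq (seq nat)) : Prop :=
  [/\ size Q = m,
      (forall i, 1 <= i <= m -> size (nth [::] Q i.-1) = m - i + 1),
      (forall i j, 1 <= i <= m -> 1 <= j <= m - i + 1 -> 0 < qent Q i j),
      (forall j, 1 <= j < m -> qent Q 1 j <= qent Q 1 j.+1) &
      (forall i j, 1 <= i <= m -> 1 <= j <= m - i + 1 ->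
         qent Q i j = qent Q 1 (i + j - 1) + i - 1)].

Definition Dop (k : nat) (Q : seq (seq nat)) : seq (seq nat) :=
  [seq [seq (nth 0 (nth [::] Q i) j) + ((i.+1 + j.+1 - 1) == k)
       | j <- iota 0 (size (nth [::] Q i))]
  | i <- iota 0 (size Q)].

Definition D_defined (m k : nat) (Q : seq (seq nat)) : Prop :=
  1 <= k <= m /\ (k = m \/ (k < m /\ qent Q 1 k < qent Q 1 k.+1)).

Definition Delta_vertex (n m : nat) (Q : seq (seq nat)) : Prop :=
  is_quasi_array m Q /\ qent Q 1 m <= n.

Definition Delta_edge (n m : nat) (Q Q' : seq (seq nat)) : Prop :=
  exists k, D_defined m k Q /\ Dop k Q = Q' /\ Delta_vertex n m Q'.

(* ---------- Quasi-ribbon tableaux ----------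
   A composition sigma is a seq of positive parts; a tableau of shape sigma is
   stored as its list of rows (row r, 0-indexed, has nth 0 sigma r cells).
   Row r starts in (0-indexed) column rowstart sigma r, so that the leftmost
   cell of row r+1 is directly below the rightmost cell of row r. *)

Definition is_composition (m : nat) (sigma : seq nat) : Prop :=
  all (fun x => 0 < x) sigma /\ sumn sigma = m.

Definition rowstart (sigma : seq nat) (r : nat) : nat :=
  sumn [seq x.-1 | x <- take r sigma].

Definition in_diag (sigma : seq nat) (r c : nat) : bool :=
  (r < size sigma) && (rowstart sigma r <= c < rowstart sigma r + nth 0 sigma r).

Definition tval (sigma : seq nat) (T : seq (seq nat)) (r c : nat) : nat :=
  nth 0 (nth [::] T r) (c - rowstart sigma r).

Definition is_qrt (sigma : seq nat) (T : seq (seq nat)) : Prop :=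
  [/\ size T = size sigma,
      (forall r, r < size sigma -> size (nth [::] T r) = nth 0 sigma r),
      (forall r c, in_diag sigma r c -> 0 < tval sigma T r c),
      (forall r c, in_diag sigma r c -> in_diag sigma r c.+1 ->
         tval sigma T r c <= tval sigma T r c.+1) &
      (forall r r' c, r < r' -> in_diag sigma r c -> in_diag sigma r' c ->
         tval sigma T r c < tval sigma T r' c)].

Definition col_reading (sigma : seq nat) (T : seq (seq nat)) : seq nat :=
  flatten [seq [seq tval sigma T r c | r <- rev (iota 0 (size sigma)) & in_diag sigma r c]
          | c <- iota 0 (sumn sigma)].

Definition fop (i : nat) (u : seq nat) : option (seq nat) :=
  if subseq [:: i.+1; i] u || (i \notin u) then None
  else Some (set_nth 0 u (size u - (index i (rev u)).+1) i.+1).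

Definition Gamma_vertex (N : nat) (sigma : seq nat) (T : seq (seq nat)) : Prop :=
  is_qrt sigma T /\ (forall r c, in_diag sigma r c -> tval sigma T r c <= N).

Definition Gamma_edge (N : nat) (sigma : seq nat) (T T' : seq (seq nat)) : Prop :=
  Gamma_vertex N sigma T' /\
  exists i, 1 <= i <= N - 1 /\ fop i (col_reading sigma T) = Some (col_reading sigma T').

(* pi_sigma(Q): the cells of Q forming the ribbon diagram of shape sigma with
   first cell (1,1); diagram row r (0-indexed) lies in row r+1 of Q. *)
Definition pi_sigma (sigma : seq nat) (Q : seq (seq nat)) : seq (seq nat) :=
  [seq [seq qent Q r.+1 (rowstart sigma r + j).+1 | j <- iota 0 (nth 0 sigma r)]
  | r <- iota 0 (size sigma)].

From mathcomp Require Import all_boot zify.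
Set Implicit Arguments. Unset Strict Implicit. Unset Printing Implicit Defensive.

(* A quasi-array is determined by its first row a_1 <= ... <= a_m, its entry
   at (i, j) being a_(i+j-1) + i - 1.  The ribbon of shape sigma placed at
   (1, 1) meets every diagonal in exactly one cell, and walking along it each
   step goes one cell right or one cell down.  Hence pi_sigma(Q) holds
   a_k + r on the cell of diagonal k (r its row, counted from 0), and
   conversely entry minus row along the ribbon is an admissible first row.

   D_k raises the cell x of diagonal k, of value v = a_k + r.  If D_k is
   defined, i.e. k = m or a_k < a_(k+1), every other cell of value v lies in
   the same row left of x, so x carries the rightmost v of the column
   reading and no v+1 is read before a v: f_v raises exactly x.  Conversely,
   if f_v raises the rightmost v, on diagonal k, and a_k = a_(k+1) with
   k < m, the next cell of the ribbon is either right of it with value v or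
   below it (read earlier) with value v+1, both excluded by f_v. *)

(** * The ribbon diagram *)

Lemma rowstartS s r : rowstart s r.+1 = rowstart s r + (nth 0 s r).-1.
Proof.
rewrite /rowstart; elim: s r => [|x s IH] [|r] //=; first by rewrite take0 addn0.
by rewrite IH addnA.
Qed.

Lemma rowstart_mono s : {homo rowstart s : r r' / r <= r'}.
Proof.
apply: homo_leq => [//|r1 r2 r3|r]; first exact: leq_trans.
by rewrite rowstartS leq_addr.
Qed.

(* Cells (r, c) are counted from 0.  [diag_cell sg d] is the cell of the
   ribbon on diagonal d + 1: the ribbon goes right until column
   [rowstart sg r.+1], where row r ends, and then down. *)
Fixpoint diag_cell (sg : seq nat) (d : nat) : nat * nat :=
  if d is d'.+1 then
    let x := diag_cell sg d' in
    if x.2 < rowstart sg x.1.+1 then (x.1, x.2.+1) else (x.1.+1, x.2)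
  else (0, 0).

Lemma diag_cell_sum sg d : (diag_cell sg d).1 + (diag_cell sg d).2 = d.
Proof. by elim: d => //= d; case: ifP => /= _; lia. Qed.

Lemma diag_cellS sg d :
  diag_cell sg d.+1 = ((diag_cell sg d).1, (diag_cell sg d).2.+1) \/
  diag_cell sg d.+1 = ((diag_cell sg d).1.+1, (diag_cell sg d).2).
Proof. by rewrite /=; case: ifP; [left|right]. Qed.

Section Ribbon.
Variables (m : nat) (sg : seq nat).
Hypothesis sgP : is_composition m sg.

Local Notation l := (size sg).

Lemma part_gt0 r : r < l -> 0 < nth 0 sg r.
Proof. by case: sgP => /allP sg_pos _ r_lt; apply/sg_pos/mem_nth. Qed.

Lemma rowstart_size : rowstart sg l + l = m.
Proof.
case: sgP; rewrite /rowstart take_size => + <-.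
elim: sg => //= x s IH /andP [x_gt0 /IH]; lia.
Qed.

Lemma in_diagE r c :
  in_diag sg r c = (r < l) && (rowstart sg r <= c <= rowstart sg r.+1).
Proof.
rewrite /in_diag rowstartS; case: ltnP => //= /part_gt0; lia.
Qed.

Lemma in_diag_col_mono r c r' c' :
  in_diag sg r c -> in_diag sg r' c' -> r < r' -> c <= c'.
Proof.
rewrite !in_diagE => /and3P [_ _ c_le] /and3P [_ le_c' _] /(rowstart_mono sg).
lia.
Qed.

Lemma in_diag_row_mono r c r' c' :
  in_diag sg r c -> in_diag sg r' c' -> r + c <= r' + c' -> r <= r'.
Proof.
move=> rc r'c' le_d; case: leqP => // lt_r'r.
have := in_diag_col_mono r'c' rc lt_r'r; lia.
Qed.

Lemma in_diag_uniq r c r' c' :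
  in_diag sg r c -> in_diag sg r' c' -> r + c = r' + c' -> (r, c) = (r', c').
Proof.
move=> rc r'c' eq_d; have := in_diag_row_mono rc r'c' (eq_leq eq_d).
have := in_diag_row_mono r'c' rc (eq_leq (esym eq_d)).
by move=> le_r'r le_rr'; congr pair; lia.
Qed.

Lemma in_diag_lt r c : in_diag sg r c -> r + c < m.
Proof.
rewrite in_diagE -rowstart_size => /and3P [lt_rl _ le_c].
have := rowstart_mono sg lt_rl; lia.
Qed.

Lemma in_diag_diag_cell d :
  d < m -> in_diag sg (diag_cell sg d).1 (diag_cell sg d).2.
Proof.
elim: d => [m_gt0|d IH lt_dm].
  have l_gt0 : 0 < l by move: m_gt0; case: sgP => _ <-; case: (sg).
  by rewrite in_diagE l_gt0 /rowstart take0.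
move: IH (diag_cell_sum sg d) => /(_ (ltnW lt_dm)); rewrite /= !in_diagE.
case: (diag_cell sg d) => r c /= /and3P [lt_rl le_c c_le] sum_rc.
case: ifP => [lt_c|/negbT c_ge] /=; first by rewrite lt_rl /=; lia.
have lt_r1 : r.+1 < l.
  rewrite ltn_neqAle lt_rl andbT; apply/eqP => r1l.
  by move: lt_dm; rewrite -rowstart_size -r1l; lia.
by rewrite lt_r1 /=; have := rowstart_mono sg (leqnSn r.+1); lia.
Qed.

Lemma diag_cellE r c : in_diag sg r c -> diag_cell sg (r + c) = (r, c).
Proof.
move=> rc; have := in_diag_diag_cell (in_diag_lt rc).
case E: diag_cell => [r' c'] /= r'c'.
by apply: in_diag_uniq r'c' rc _; rewrite -(diag_cell_sum sg (r + c)) E.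
Qed.

Lemma diag_cell_last : 0 < m -> (diag_cell sg m.-1).1 = l.-1.
Proof.
move=> m_gt0; have := in_diag_diag_cell (ltac:(lia) : m.-1 < m).
have := diag_cell_sum sg m.-1.
case: (diag_cell sg m.-1) => r c /= sum_rc.
rewrite in_diagE => /and3P [lt_rl _ le_c].
case: (ltnP r.+1 l) => [lt_r1 | ]; last lia.
have : in_diag sg r.+1 (rowstart sg r.+1).
  by rewrite in_diagE lt_r1 leqnn; exact: rowstart_mono.
move/in_diag_lt; lia.
Qed.

End Ribbon.

(** * Quasi-Kashiwara operators *)

Lemma subseq2P (T : eqType) (x0 a b : T) (s : seq T) :
  reflect (exists p q, [/\ p < q < size s, nth x0 s p = a & nth x0 s q = b])
          (subseq [:: a; b] s).
Proof.
apply: (iffP idP) => [|[p [q [/andP [lt_pq lt_q] <- <-]]]].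
  elim: s => [|z s IH] //=; case: eqP => [<-|_].
    rewrite sub1seq => bs; exists 0, (index b s).+1.
    by rewrite /= ltnS index_mem nth_index.
  by move=> /IH [p [q [lt_pq ? ?]]]; exists p.+1, q.+1.
have := @cat_subseq _ [:: nth x0 s p] [:: nth x0 s q] (take q s) (drop q s).
rewrite cat_take_drop; apply; rewrite sub1seq.
  by rewrite -(nth_take x0 lt_pq); apply: mem_nth; rewrite size_take lt_q.
rewrite -[X in nth x0 s X](addn0 q) -nth_drop; apply: mem_nth.
by rewrite size_drop subn_gt0.
Qed.

Lemma last_index_spec (T : eqType) (x0 x : T) s : x \in s ->
  let q := size s - (index x (rev s)).+1 in
  [/\ q < size s, nth x0 s q = x & forall j, q < j < size s -> nth x0 s j != x].
Proof.
move=> xs q; have := xs; rewrite -mem_rev -index_mem size_rev => lt_i.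
split; first by rewrite /q; lia.
  by rewrite /q -nth_rev ?nth_index ?mem_rev.
move=> j /andP [lt_qj lt_j]; have lt_ji : size s - j.+1 < index x (rev s) by lia.
move: (before_find x0 lt_ji); rewrite nth_rev; last by lia.
have -> : size s - (size s - j.+1).+1 = j by lia.
by move=> /= /negbT.
Qed.

Lemma set_nth_map_index (T : eqType) (L : seq T) (f : T -> nat) y :
  uniq L -> y \in L ->
  set_nth 0 [seq f x | x <- L] (index y L) (f y).+1 = [seq f x + (x == y) | x <- L].
Proof.
move=> L_uniq yL; have lt_y : index y L < size L by rewrite index_mem.
apply: (@eq_from_nth _ 0) => [|j]; rewrite size_set_nth !size_map; first by lia.
move=> lt_j; have lt_jL : j < size L by lia.
rewrite nth_set_nth /= !(nth_map y) //; case: eqP => [->|ne_j].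
  by rewrite nth_index // eqxx addn1.
suff /negbTE -> : nth y L j != y by rewrite addn0.
by apply/eqP => eq_y; apply: ne_j; rewrite -eq_y index_uniq.
Qed.

Section MappedWord.
Variables (T : eqType) (L : seq T) (f : T -> nat).
Hypothesis L_uniq : uniq L.

Local Notation u := [seq f x | x <- L].

Lemma subseq2_mapP a b :
  reflect (exists x z, [/\ x \in L, z \in L, index x L < index z L, f x = a & f z = b])
          (subseq [:: a; b] u).
Proof.
apply: (iffP (subseq2P 0 _ _ _)).
  move=> [p [q [/andP [lt_pq]]]].
  rewrite size_map => lt_q; have lt_p := ltn_trans lt_pq lt_q.
  have [y0 _] : exists y0 : T, true by case: (L) lt_q => // y0; exists y0.
  rewrite !(nth_map y0) // => fp fq; exists (nth y0 L p), (nth y0 L q).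
  by rewrite !mem_nth // !index_uniq.
move=> [x [z [xL zL lt_xz <- <-]]].
exists (index x L), (index z L); rewrite size_map index_mem zL lt_xz.
by rewrite !(nth_map x) ?index_mem ?nth_index.
Qed.

Lemma fop_map i y : y \in L -> f y = i ->
  (forall z, z \in L -> index y L < index z L -> f z != i) ->
  ~~ subseq [:: i.+1; i] u ->
  fop i u = Some [seq f x + (x == y) | x <- L].
Proof.
move=> yL fy last_y nosub; have iu : i \in u by rewrite -fy map_f.
rewrite /fop (negbTE nosub) iu /=; congr Some.
have [] := last_index_spec 0 iu; set q := _ - _.
rewrite size_map => lt_q nth_q after_q.
suff -> : q = index y L by rewrite -fy set_nth_map_index.
have lt_y : index y L < size L by rewrite index_mem.
case: (ltngtP q (index y L)) => // [lt_qy | gt_qy].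
  move: (after_q (index y L)); rewrite lt_qy lt_y (nth_map y) // nth_index //.
  by rewrite fy eqxx => /(_ isT).
have := last_y (nth y L q); rewrite mem_nth // index_uniq // gt_qy -(nth_map y 0) //.
by rewrite nth_q eqxx => /(_ isT isT).
Qed.

Lemma fop_mapP i w : fop i u = Some w ->
  exists2 y, y \in L &
    [/\ f y = i, forall z, z \in L -> index y L < index z L -> f z != i,
        ~~ subseq [:: i.+1; i] u & w = [seq f x + (x == y) | x <- L]].
Proof.
rewrite /fop; case: ifP => // /norP [nosub /negbNE iu] [<-].
have [] := last_index_spec 0 iu; set q := _ - _.
rewrite size_map => lt_q nth_q after_q; have /mapP [y0 _ _] := iu.
have idx : index (nth y0 L q) L = q by rewrite index_uniq.
have fy : f (nth y0 L q) = i by rewrite -(nth_map y0 0).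
exists (nth y0 L q); first exact: mem_nth.
split=> //; last by rewrite -[in LHS]idx -fy set_nth_map_index ?mem_nth.
move=> z zL; rewrite idx => lt_qz.
have := after_q (index z L); rewrite index_mem zL lt_qz (nth_map y0) ?index_mem //.
by rewrite nth_index //; apply.
Qed.

End MappedWord.

Definition cells (sg : seq nat) : seq (nat * nat) :=
  flatten [seq [seq (r, c) | r <- rev (iota 0 (size sg)) & in_diag sg r c]
          | c <- iota 0 (sumn sg)].

Definition reading_lt (x y : nat * nat) : bool :=
  (x.2 < y.2) || ((x.2 == y.2) && (y.1 < x.1)).

Lemma col_reading_cells sg T :
  col_reading sg T = [seq tval sg T x.1 x.2 | x <- cells sg].
Proof.
rewrite /col_reading /cells map_flatten -map_comp; congr flatten.
by apply: eq_map => c /=; rewrite -map_comp.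
Qed.

Lemma cells_pairwise sg : pairwise reading_lt (cells sg).
Proof.
have col_pairwise c :
    pairwise reading_lt [seq (r, c) | r <- rev (iota 0 (size sg)) & in_diag sg r c].
  rewrite pairwise_map; apply: pairwise_filter.
  apply/(pairwiseP 0) => i j; rewrite !inE size_rev size_iota => lt_i lt_j lt_ij.
  by rewrite /relpre /reading_lt /= !nth_rev ?size_iota // !nth_iota; lia.
rewrite /cells; move: {2}0 (sumn sg) => c0 k; elim: k c0 => [|k IH] c0 //=.
rewrite pairwise_cat col_pairwise IH !andbT; apply/allrelP => x y.
move=> /mapP [r _ ->] /flatten_mapP [c]; rewrite mem_iota => lt_c /mapP [r' _ ->].
rewrite /reading_lt /=; lia.
Qed.

Lemma cells_uniq sg : uniq (cells sg).
Proof.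
by apply: pairwise_uniq (cells_pairwise sg) => x; rewrite /reading_lt ltnn eqxx ltnn.
Qed.

Section Reading.
Variables (m : nat) (sg : seq nat).
Hypothesis sgP : is_composition m sg.

Lemma mem_cells x : (x \in cells sg) = in_diag sg x.1 x.2.
Proof.
case: x => r c /=; apply/idP/idP.
  by move=> /flatten_mapP [c' _] /mapP [r' +] [-> ->]; rewrite mem_filter => /andP [].
move=> rc; have lt_d := in_diag_lt sgP rc; have /andP [lt_rl _] := rc.
apply/flatten_mapP; exists c; first by rewrite mem_iota; case: sgP => _ ->; lia.
by apply/mapP; exists r; rewrite // mem_filter rc mem_rev mem_iota; lia.
Qed.

Lemma index_cells_lt x y : x \in cells sg -> y \in cells sg ->
  (index x (cells sg) < index y (cells sg)) = reading_lt x y.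
Proof.
move=> xL yL; have /(pairwiseP (0, 0)) pw := cells_pairwise sg.
apply/idP/idP => [lt_xy|xy].
  by have := pw _ _ _ _ lt_xy; rewrite !inE !index_mem !nth_index //; apply.
case: ltngtP => // [gt_xy|/index_inj eq_xy]; last first.
  by move: xy; rewrite eq_xy // /reading_lt ltnn eqxx ltnn.
have := pw _ _ _ _ gt_xy; rewrite !inE !index_mem !nth_index // => /(_ yL xL).
by move: xy; rewrite /reading_lt; lia.
Qed.

Lemma reading_lt_cases x y : in_diag sg x.1 x.2 -> in_diag sg y.1 y.2 ->
  reading_lt x y ->
  (x.1 <= y.1 /\ x.1 + x.2 < y.1 + y.2) \/ (y.1 < x.1 /\ x.2 = y.2).
Proof.
move=> xD yD; rewrite /reading_lt; case: (leqP x.1 y.1) => [le_xy | gt_xy].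
  by case/orP => [|/andP [/eqP]]; [left | ]; lia.
by have := in_diag_col_mono sgP yD xD gt_xy; right; lia.
Qed.

End Reading.

(** * Quasi-arrays and their first rows *)

Definition admissible_row (m : nat) (a : nat -> nat) : Prop :=
  (forall j, 0 < j <= m -> 0 < a j) /\ (forall j, 0 < j < m -> a j <= a j.+1).

Definition qarray (m : nat) (a : nat -> nat) : seq (seq nat) :=
  [seq [seq a (i + j).+1 + i | j <- iota 0 (m - i)] | i <- iota 0 m].

Definition bump (a : nat -> nat) (k j : nat) : nat := a j + (j == k).

Section QuasiArrays.
Variable m : nat.

Lemma admissible_row_mono a : admissible_row m a ->
  forall i j, 0 < i -> i <= j <= m -> a i <= a j.
Proof.
case=> _ a_step i + i_gt0; elim=> [|j IH]; first lia.
rewrite leq_eqVlt ltnS => /andP [/orP [/eqP <- //|le_ij] lt_jm].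
by apply: leq_trans (IH _) (a_step _ _); apply/andP; split=> //; lia.
Qed.

Lemma qent_qarray a i j : i + j < m -> qent (qarray m a) i.+1 j.+1 = a (i + j).+1 + i.
Proof.
move=> lt_ij; rewrite /qent /qarray /= (nth_map 0) ?size_iota ?nth_iota; try lia.
by rewrite (nth_map 0) ?size_iota ?nth_iota ?add0n; lia.
Qed.

Lemma qent1_qarray a j : 0 < j <= m -> qent (qarray m a) 1 j = a j.
Proof. by case: j => // j lt_j; rewrite qent_qarray ?add0n ?addn0 //; lia. Qed.

Lemma qarray_quasi a : admissible_row m a -> is_quasi_array m (qarray m a).
Proof.
move=> [a_pos a_step]; split.
- by rewrite size_map size_iota.
- move=> i lt_i; rewrite /qarray (nth_map 0) ?size_iota; last lia.
  by rewrite size_map size_iota nth_iota; lia.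
- move=> [|i] [|j] //= lt_i lt_j; rewrite qent_qarray; last lia.
  by have := a_pos (i + j).+1; lia.
- by move=> j lt_j; rewrite !qent1_qarray ?a_step; lia.
- move=> [|i] [|j] //= lt_i lt_j; rewrite qent_qarray; last lia.
  have -> : i.+1 + j.+1 - 1 = (i + j).+1 by lia.
  rewrite qent1_qarray; lia.
Qed.

Lemma eq_qarray a b : (forall j, 0 < j <= m -> a j = b j) -> qarray m a = qarray m b.
Proof.
move=> eq_ab; apply/eq_in_map => i; rewrite mem_iota => lt_i.
by apply/eq_in_map => j; rewrite mem_iota => lt_j; rewrite eq_ab //; lia.
Qed.

Lemma quasi_admissible_row Q : is_quasi_array m Q -> admissible_row m (qent Q 1).
Proof. by case=> _ _ Q_pos Q_step _; split=> [j lt_j|//]; apply: Q_pos; lia. Qed.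

Lemma qarrayE Q : is_quasi_array m Q -> Q = qarray m (qent Q 1).
Proof.
case=> Q_size Q_row _ _ Q_diag; apply: (@eq_from_nth _ [::]) => [|i].
  by rewrite size_map size_iota.
rewrite Q_size => lt_i; rewrite /qarray (nth_map 0) ?size_iota // nth_iota //.
have row_size := Q_row i.+1 (ltac:(lia)).
apply: (@eq_from_nth _ 0) => [|j]; first by rewrite size_map size_iota row_size; lia.
rewrite row_size => lt_j; rewrite (nth_map 0) ?size_iota; last lia.
rewrite nth_iota; last lia.
rewrite -[nth 0 _ j]/(qent Q i.+1 j.+1) Q_diag ?add0n; try lia.
have -> : i.+1 + j.+1 - 1 = (i + j).+1 by lia.
lia.
Qed.

Lemma quasi_arrayP Q :
  is_quasi_array m Q <-> exists2 a, admissible_row m a & Q = qarray m a.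
Proof.
split=> [Q_quasi | [a a_adm ->]]; last exact: qarray_quasi.
by exists (qent Q 1); [exact: quasi_admissible_row | exact: qarrayE].
Qed.

Lemma bump_admissible a k : admissible_row m a -> (k < m -> a k < a k.+1) ->
  admissible_row m (bump a k).
Proof.
move=> [a_pos a_step] a_stepk; split=> j lt_j; rewrite /bump.
  by rewrite ltn_addr ?a_pos.
case: (eqVneq j k) lt_j => [-> | ne_jk] lt_j; last first.
  by rewrite addn0 (leq_trans (a_step j lt_j)) ?leq_addr.
by rewrite (introF eqP (nesym (n_Sn k))) addn0 addn1; apply: a_stepk; lia.
Qed.

Lemma D_defined_qarray a k : D_defined m k (qarray m a) <->
  0 < k <= m /\ (k < m -> a k < a k.+1).
Proof.
rewrite /D_defined; split=> -[k_range step]; split=> //.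
  by case: step => [-> | [lt_k]]; [lia | rewrite !qent1_qarray //; lia].
case: (ltnP k m) => [lt_k | ]; last by left; lia.
by right; rewrite !qent1_qarray ?step; lia.
Qed.

Lemma Dop_qarray a k : Dop k (qarray m a) = qarray m (bump a k).
Proof.
rewrite /Dop /qarray size_map size_iota.
apply/eq_in_map => i; rewrite mem_iota => lt_i.
rewrite (nth_map 0) ?size_iota; last lia.
rewrite nth_iota; last lia.
rewrite size_map size_iota; apply/eq_in_map => j; rewrite mem_iota => lt_j.
rewrite (nth_map 0) ?size_iota; last lia.
rewrite nth_iota /bump ?add0n; last lia.
have -> : i.+1 + j.+1 - 1 = (i + j).+1 by lia.
by rewrite addnAC.
Qed.

End QuasiArrays.

(* The entry Q_(r+1, c+1) = a_(r+c+1) + r of the quasi-array with first row a. *)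
Definition cell_value (a : nat -> nat) (x : nat * nat) : nat := a (x.1 + x.2).+1 + x.1.

Definition has_shape (sg : seq nat) (T : seq (seq nat)) : Prop :=
  size T = size sg /\ forall r, r < size sg -> size (nth [::] T r) = nth 0 sg r.

Lemma pi_sigma_shape sg Q : has_shape sg (pi_sigma sg Q).
Proof.
split=> [|r lt_r]; first by rewrite size_map size_iota.
by rewrite /pi_sigma (nth_map 0) ?size_iota // size_map size_iota nth_iota.
Qed.

Section PiSigma.
Variables (m : nat) (sg : seq nat).
Hypothesis sgP : is_composition m sg.

Lemma tval_pi_sigma a r c :
  in_diag sg r c -> tval sg (pi_sigma sg (qarray m a)) r c = cell_value a (r, c).
Proof.
move=> rc; have lt_d := in_diag_lt sgP rc.
move: rc => /andP [lt_r /andP [le_c lt_c]].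
rewrite /tval /pi_sigma (nth_map 0) ?size_iota // nth_iota // add0n.
rewrite (nth_map 0) ?size_iota; last lia.
by rewrite nth_iota ?add0n ?subnKC ?qent_qarray //; lia.
Qed.

Lemma col_reading_pi_sigma a :
  col_reading sg (pi_sigma sg (qarray m a)) = [seq cell_value a x | x <- cells sg].
Proof.
rewrite col_reading_cells; apply/eq_in_map => -[r c].
by rewrite (mem_cells sgP) => /tval_pi_sigma ->.
Qed.

Lemma tableau_ext T1 T2 : has_shape sg T1 -> has_shape sg T2 ->
  (forall r c, in_diag sg r c -> tval sg T1 r c = tval sg T2 r c) -> T1 = T2.
Proof.
move=> [size1 row1] [size2 row2] eq_tval.
apply: (@eq_from_nth _ [::]) => [|r]; rewrite ?size1 // => lt_r.
apply: (@eq_from_nth _ 0) => [|j]; rewrite ?row1 ?row2 // => lt_j.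
have := eq_tval r (rowstart sg r + j); rewrite /tval addKn; apply.
by rewrite /in_diag lt_r /=; lia.
Qed.

Lemma cell_value_bump a k x : 0 < k -> in_diag sg x.1 x.2 ->
  cell_value (bump a k) x = cell_value a x + (x == diag_cell sg k.-1).
Proof.
move=> k_gt0 xD; rewrite /cell_value /bump addnAC; congr (_ + nat_of_bool _).
apply/eqP/eqP => [<- | ->]; last by rewrite diag_cell_sum prednK.
by case: x xD => r c /= /(diag_cellE sgP).
Qed.

Lemma cell_values_inj a b :
  [seq cell_value a x | x <- cells sg] = [seq cell_value b x | x <- cells sg] ->
  qarray m a = qarray m b.
Proof.
move=> /eq_in_map eq_ab; apply: eq_qarray => -[|d] // lt_d.
have := eq_ab (diag_cell sg d); rewrite (mem_cells sgP) (in_diag_diag_cell sgP) //.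
by rewrite /cell_value diag_cell_sum => /(_ isT) /eqP; rewrite eqn_add2r => /eqP.
Qed.

End PiSigma.

(** * Crystal edges *)

Section CrystalEdges.
Variables (m : nat) (sg : seq nat) (a : nat -> nat).
Hypothesis sgP : is_composition m sg.
Hypothesis a_mono : forall i j, 0 < i -> i <= j <= m -> a i <= a j.

Local Notation cells := (cells sg).
Local Notation word b := [seq cell_value b x | x <- cells].

Lemma cell_value_mono x y : in_diag sg x.1 x.2 -> in_diag sg y.1 y.2 ->
  x.1 + x.2 <= y.1 + y.2 -> cell_value a x <= cell_value a y.
Proof.
move=> xD yD le_xy; have := in_diag_row_mono sgP xD yD le_xy.
have := @a_mono (x.1 + x.2).+1 (y.1 + y.2).+1; have := in_diag_lt sgP yD.
rewrite /cell_value; lia.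
Qed.

Lemma fop_cell_values k : 0 < k <= m -> (k < m -> a k < a k.+1) ->
  fop (cell_value a (diag_cell sg k.-1)) (word a) = Some (word (bump a k)).
Proof.
move=> k_range a_step; set x0 := diag_cell sg k.-1; set v := cell_value a x0.
have x0D : in_diag sg x0.1 x0.2 by apply: (in_diag_diag_cell sgP); lia.
have x0_sum : x0.1 + x0.2 = k.-1 := diag_cell_sum sg k.-1.
have same_value y : in_diag sg y.1 y.2 -> cell_value a y = v ->
    y.1 = x0.1 /\ y.1 + y.2 <= x0.1 + x0.2.
  move=> yD; have := in_diag_lt sgP yD.
  rewrite /v /cell_value x0_sum prednK; last lia.
  case: (ltngtP (y.1 + y.2) k.-1) => [lt_yk | gt_yk | eq_yk] lt_ym.
  - have := in_diag_row_mono sgP yD x0D (ltac:(lia)).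
    have := @a_mono (y.1 + y.2).+1 k; lia.
  - have := in_diag_row_mono sgP x0D yD (ltac:(lia)).
    have := @a_mono k.+1 (y.1 + y.2).+1; have := a_step; lia.
  - have := in_diag_uniq sgP yD x0D (ltac:(lia)); case=> -> _; lia.
rewrite (fop_map (cells_uniq sg) (y := x0)) ?(mem_cells sgP) //.
- congr Some; apply/eq_in_map => x; rewrite (mem_cells sgP) => xD.
  by rewrite (cell_value_bump sgP) //; lia.
- move=> z; rewrite (mem_cells sgP) => zD.
  rewrite index_cells_lt ?(mem_cells sgP) // /reading_lt => lt_x0z.
  by apply/eqP => /(same_value _ zD); lia.
apply/(subseq2_mapP _ (cells_uniq sg)) => -[[r c] [[r' c'] [+ + + vx vz]]].
rewrite !(mem_cells sgP) => /= xD zD; rewrite index_cells_lt ?(mem_cells sgP) //.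
have [/= z_row le_z] := same_value (r', c') zD vz.
case/(reading_lt_cases (x := (r, c)) (y := (r', c')) sgP xD zD) => /= [[_ lt_xz] | ].
  by have := cell_value_mono (x := (r, c)) (y := (r', c')) xD zD (ltnW lt_xz); lia.
move=> [lt_zx eq_col].
have := in_diag_col_mono sgP x0D xD (ltac:(lia)).
have := in_diag_lt sgP xD; have := @a_mono k.+1 (r + c).+1; have := a_step.
move: vx; rewrite /v /cell_value x0_sum prednK /=; lia.
Qed.

Lemma fop_cell_values_inv i w : fop i (word a) = Some w ->
  exists2 k, 0 < k <= m /\ (k < m -> a k < a k.+1) & w = word (bump a k).
Proof.
case/(fop_mapP (cells_uniq sg)) => -[r c] + [vy last_y nosub ->].
rewrite (mem_cells sgP) => /= yD; have y_cell := diag_cellE sgP yD.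
exists (r + c).+1; last first.
  apply/eq_in_map => x; rewrite (mem_cells sgP) => xD.
  by rewrite (cell_value_bump sgP) // y_cell.
split=> [|lt_k]; first by have := in_diag_lt sgP yD; lia.
rewrite ltnNge; apply/negP => le_a.
have eq_a : a (r + c).+2 = a (r + c).+1.
  by have := @a_mono (r + c).+1 (r + c).+2; lia.
have := in_diag_diag_cell sgP lt_k.
case: (diag_cellS sg (r + c)); rewrite y_cell => -> /= zD.
  have := last_y (r, c.+1).
  rewrite (mem_cells sgP) zD index_cells_lt ?(mem_cells sgP) //.
  by rewrite /reading_lt ltnSn /cell_value /= addnS eq_a -vy eqxx => /(_ isT isT).
move/negP: nosub; apply; apply/(subseq2_mapP _ (cells_uniq sg)).
exists (r.+1, c), (r, c).
rewrite !(mem_cells sgP) zD yD index_cells_lt ?(mem_cells sgP) //.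
split=> //; first by rewrite /reading_lt ltnn eqxx ltnSn orbT.
by rewrite -vy /cell_value /= addSn eq_a addnS.
Qed.

End CrystalEdges.

Definition bar_row (sg : seq nat) (T : seq (seq nat)) (j : nat) : nat :=
  tval sg T (diag_cell sg j.-1).1 (diag_cell sg j.-1).2 - (diag_cell sg j.-1).1.

Section Tableau.
Variables (m : nat) (sg : seq nat) (T : seq (seq nat)).
Hypothesis sgP : is_composition m sg.
Hypothesis T_qrt : is_qrt sg T.

Local Notation cell d := (diag_cell sg d).
Local Notation entry d := (tval sg T (cell d).1 (cell d).2).

Lemma tval_diag_cellS d :
  d.+1 < m -> entry d + (cell d.+1).1 <= entry d.+1 + (cell d).1.
Proof.
move=> lt_d; have dD := in_diag_diag_cell sgP (ltnW lt_d).
have := in_diag_diag_cell sgP lt_d; case: T_qrt => _ _ _ T_row T_col.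
case: (diag_cellS sg d) => -> /= d1D.
  by have := T_row _ _ dD d1D; lia.
by have := T_col _ _ _ (ltnSn _) dD d1D; lia.
Qed.

Lemma row_lt_tval_diag_cell d : d < m -> (cell d).1 < entry d.
Proof.
elim: d => [m_gt0 | d IH lt_d].
  by case: T_qrt => _ _ T_pos _ _; apply: T_pos (in_diag_diag_cell sgP m_gt0).
by have := tval_diag_cellS lt_d; have := IH (ltnW lt_d); lia.
Qed.

Lemma bar_row_admissible : admissible_row m (bar_row sg T).
Proof.
split=> -[|d] // lt_d; rewrite /bar_row !succnK.
  by have := row_lt_tval_diag_cell (ltac:(lia) : d < m); lia.
have := tval_diag_cellS (ltac:(lia) : d.+1 < m).
by have := row_lt_tval_diag_cell (ltac:(lia) : d < m); lia.
Qed.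

Lemma tval_bar_row r c :
  in_diag sg r c -> tval sg T r c = cell_value (bar_row sg T) (r, c).
Proof.
move=> rc; have lt_d := in_diag_lt sgP rc.
have := row_lt_tval_diag_cell lt_d.
by rewrite /cell_value /bar_row /= (diag_cellE sgP) //=; lia.
Qed.

Lemma pi_sigma_bar_row : pi_sigma sg (qarray m (bar_row sg T)) = T.
Proof.
apply: (tableau_ext (pi_sigma_shape _ _)); first by case: T_qrt.
by move=> r c rc; rewrite (tval_pi_sigma sgP) // tval_bar_row.
Qed.

Lemma bar_row_uniq Q :
  is_quasi_array m Q -> pi_sigma sg Q = T -> Q = qarray m (bar_row sg T).
Proof.
move=> Q_quasi; rewrite {1}(qarrayE Q_quasi) => piQ.
rewrite (qarrayE Q_quasi); apply: eq_qarray => -[|d] // lt_d.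
have := in_diag_diag_cell sgP lt_d; have := diag_cell_sum sg d.
case: (diag_cell sg d) => r c /= <- rc; have := tval_bar_row rc.
by rewrite -{1}piQ (tval_pi_sigma sgP) // /cell_value /=; lia.
Qed.

End Tableau.

Section Isomorphism.
Variables (n m : nat) (sg : seq nat).
Hypothesis sgP : is_composition m sg.

Local Notation N := (n + size sg - 1).

Lemma pi_sigma_Gamma_vertex Q :
  Delta_vertex n m Q -> Gamma_vertex N sg (pi_sigma sg Q).
Proof.
case=> /quasi_arrayP [a a_adm ->] le_an.
have a_mono := admissible_row_mono a_adm; have [a_pos _] := a_adm.
have [size_pi row_pi] := pi_sigma_shape sg (qarray m a).
split; [split=> // | ] => [r c rc | r c rc rc1 | r r' c lt_r rc r'c | r c rc];
  rewrite ?(tval_pi_sigma sgP) //; have := in_diag_lt sgP rc.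
- by have := a_pos (r + c).+1; rewrite /cell_value /=; lia.
- move=> _; apply: (cell_value_mono (x := (r, c)) (y := (r, c.+1)) sgP a_mono rc rc1).
  by rewrite /=; lia.
- have := in_diag_lt sgP r'c; have := a_mono (r + c).+1 (r' + c).+1.
  by rewrite /cell_value /=; lia.
- move: le_an; rewrite qent1_qarray; last by have := in_diag_lt sgP rc; lia.
  have /andP [lt_r _] := rc; have := a_mono (r + c).+1 m; rewrite /cell_value /=; lia.
Qed.

Lemma bar_row_exists_unique T :
  is_qrt sg T -> exists! Q, is_quasi_array m Q /\ pi_sigma sg Q = T.
Proof.
move=> T_qrt; exists (qarray m (bar_row sg T)); split.
  by split; [apply/qarray_quasi/bar_row_admissible | apply: pi_sigma_bar_row].
by move=> Q [Q_quasi piQ]; rewrite (bar_row_uniq sgP T_qrt Q_quasi piQ).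
Qed.

Lemma pi_sigma_Delta_vertex T Q : 0 < m -> Gamma_vertex N sg T ->
  is_quasi_array m Q -> pi_sigma sg Q = T -> Delta_vertex n m Q.
Proof.
move=> m_gt0 [T_qrt T_le] Q_quasi piQ; split=> //.
rewrite (bar_row_uniq sgP T_qrt Q_quasi piQ) qent1_qarray /bar_row; last lia.
have := T_le _ _ (in_diag_diag_cell sgP (ltac:(lia) : m.-1 < m)).
by rewrite (diag_cell_last sgP m_gt0); lia.
Qed.

Lemma Delta_edge_Gamma_edge Q Q' : Delta_vertex n m Q ->
  Delta_edge n m Q Q' -> Gamma_edge N sg (pi_sigma sg Q) (pi_sigma sg Q').
Proof.
case=> /quasi_arrayP [a a_adm ->] _ [k [+ [<- Q'_vertex]]].
move=> /D_defined_qarray [k_range a_step].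
split; first exact: pi_sigma_Gamma_vertex.
exists (cell_value a (diag_cell sg k.-1)); split; last first.
  rewrite Dop_qarray !(col_reading_pi_sigma sgP).
  exact: (fop_cell_values sgP (admissible_row_mono a_adm)).
have /andP [lt_r _] := in_diag_diag_cell sgP (ltac:(lia) : k.-1 < m).
case: Q'_vertex; rewrite Dop_qarray qent1_qarray; last lia.
have := admissible_row_mono (bump_admissible a_adm a_step) (i := k) (j := m).
have [a_pos _] := a_adm; have := a_pos k k_range.
rewrite /cell_value diag_cell_sum prednK /bump ?eqxx; lia.
Qed.

Lemma Gamma_edge_Delta_edge Q Q' : Delta_vertex n m Q -> Delta_vertex n m Q' ->
  Gamma_edge N sg (pi_sigma sg Q) (pi_sigma sg Q') -> Delta_edge n m Q Q'.
Proof.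
case=> /quasi_arrayP [a a_adm ->] _ Q'_vertex [_ [i [_]]].
case: Q'_vertex (Q'_vertex) => /quasi_arrayP [a' _ ->] _ Q'_vertex.
rewrite !(col_reading_pi_sigma sgP).
case/(fop_cell_values_inv sgP (admissible_row_mono a_adm)) => k Dk eq_w.
exists k; split; first exact/D_defined_qarray.
by split=> //; rewrite Dop_qarray (cell_values_inj sgP eq_w).
Qed.

End Isomorphism.

Unset Implicit Arguments.

Theorem theorem4p5 (n m : nat) (sigma : seq nat) :
  0 < n -> 0 < m -> is_composition m sigma ->
  let N := n + size sigma - 1 in
  (* Phi_sigma maps vertices to vertices *)
  (forall Q, Delta_vertex n m Q -> Gamma_vertex N sigma (pi_sigma sigma Q)) /\
  (* T |-> bar T is well defined (unique quasi-array of size m with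
     pi_sigma = T) and lands in Delta(T_n, m) *)
  (forall T, Gamma_vertex N sigma T ->
     (exists! Q, is_quasi_array m Q /\ pi_sigma sigma Q = T) /\
     (forall Q, is_quasi_array m Q -> pi_sigma sigma Q = T -> Delta_vertex n m Q)) /\
  (* edges correspond (unlabelled directed graphs) *)
  (forall Q Q', Delta_vertex n m Q -> Delta_vertex n m Q' ->
     (Delta_edge n m Q Q' <-> Gamma_edge N sigma (pi_sigma sigma Q) (pi_sigma sigma Q'))).
Proof.
move=> _ m_gt0 sgP N; split; [|split].
- exact: pi_sigma_Gamma_vertex.
- move=> T T_vertex; split; first exact: bar_row_exists_unique T_vertex.1.
  by move=> Q; apply: pi_sigma_Delta_vertex.
move=> Q Q' Q_vertex Q'_vertex; split; first exact: Delta_edge_Gamma_edge.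
exact: Gamma_edge_Delta_edge.
Qed.
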